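(* Let $\mathcal{S}\subseteq 2^{[n]}$ be a Sperner family and let $A\subseteq[n]$ be a fixed set. Define $h_A:\mathcal{S}\to 2^{[n]}$ by $h_A(S)=S\cap A$. Then $\mathcal{F}(\mathcal{S},h_A)$ is s-extremal. Moreover, if $\mathcal{F}(\mathcal{S},h_A)\neq 2^{[n]}$, then there exists a set $F\subseteq[n]$ with $F\notin\mathcal{F}(\mathcal{S},h_A)$ such that $\mathcal{F}'=\mathcal{F}(\mathcal{S},h_A)\cup\{F\}$ is again s-extremal, and furthermore $\mathcal{F}'=\mathcal{F}(\mathcal{S}',h_A)$ for some suitable Sperner family $\mathcal{S}'\subseteq 2^{[n]}$ (where $h_A(S)=S\cap A$ on $\mathcal{S}'$).
   Context: $[n]=\{1,\dots,n\}$. A family $\mathcal{S}\subseteq 2^{[n]}$ is a Sperner family if no member is contained in another member. A family $\mathcal{F}\subseteq 2^{[n]}$ shatters $S\subseteq[n]$ if $\{F\cap S: F\in\mathcal{F}\}=2^S$; $\mathrm{Sh}(\mathcal{F})$ denotes the family of sets shattered by $\mathcal{F}$. $\mathcal{F}$ is s-extremal if $|\mathrm{Sh}(\mathcal{F})|=|\mathcal{F}|$. For $H\subseteq S\subseteq[n]$ let $\mathcal{Q}_{S,H}=\{H\cup B: B\subseteq [n]\setminus S\}$ (the sets whose intersection with $S$ is $H$). For a Sperner family $\mathcal{S}$ and a function $h:\mathcal{S}\to 2^{[n]}$ with $h(S)\subseteq S$ for all $S\in\mathcal{S}$, put $\mathcal{F}(\mathcal{S},h)=2^{[n]}\setminus\bigcup_{S\in\mathcal{S}}\mathcal{Q}_{S,h(S)}$.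 *)

From mathcomp Require Import all_boot.
Set Implicit Arguments. Unset Strict Implicit. Unset Printing Implicit Defensive.

Definition sperner (n : nat) (Sp : {set {set 'I_n}}) : Prop :=
  forall S T, S \in Sp -> T \in Sp -> S \subset T -> S = T.

Definition shatters (n : nat) (F : {set {set 'I_n}}) (S : {set 'I_n}) : bool :=
  [set X :&: S | X in F] == powerset S.

Definition Sh (n : nat) (F : {set {set 'I_n}}) : {set {set 'I_n}} :=
  [set S | shatters F S].

Definition s_extremal (n : nat) (F : {set {set 'I_n}}) : Prop :=
  #|Sh F| = #|F|.

(* Q_{S,H} = { X ⊆ [n] : X ∩ S = H } = { H ∪ B : B ⊆ [n] \ S } when H ⊆ S *)
Definition Q (n : nat) (S H : {set 'I_n}) : {set {set 'I_n}} :=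
  [set H :|: B | B in powerset (~: S)].

Definition Fam (n : nat) (Sp : {set {set 'I_n}}) (h : {set 'I_n} -> {set 'I_n})
  : {set {set 'I_n}} :=
  ~: \bigcup_(S in Sp) Q S (h S).

Definition hA (n : nat) (A : {set 'I_n}) (S : {set 'I_n}) : {set 'I_n} := S :&: A.

From mathcomp Require Import all_boot.
Set Implicit Arguments. Unset Strict Implicit.

(* Let [agree A X] be the set of coordinates on which X and A agree. Then
   X ∈ Q_{S, S ∩ A} iff S ⊆ agree A X, so X ∈ F(𝒮, h_A) iff agree A X contains
   no member of 𝒮. The involution [agree A] thus maps F(𝒮, h_A) bijectively
   onto the down-set D of sets containing no member of 𝒮, and D is also
   exactly the family of sets shattered by F(𝒮, h_A); this is s-extremality.
   For the extension pick S0 ∈ 𝒮: by the Sperner property D ∪ {S0} is again a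
   down-set, hence the family of sets avoiding its minimal non-members 𝒮',
   and F(𝒮', h_A) = F(𝒮, h_A) ∪ {agree A S0}. *)

Section DownSets.
Variable T : finType.
Implicit Types (D Sp : {set {set T}}) (S Z : {set T}).

Definition down_closed D := forall Z Z', Z' \subset Z -> Z \in D -> Z' \in D.

Definition avoiding Sp := [set Z : {set T} | [forall S in Sp, ~~ (S \subset Z)]].

Lemma avoiding_down_closed Sp : down_closed (avoiding Sp).
Proof.
move=> Z Z' sZ'Z; rewrite !inE => /forall_inP avZ; apply/forall_inP => S SSp.
by apply: contra (avZ S SSp) => /subset_trans; apply.
Qed.

Lemma notin_avoiding Sp S : S \in Sp -> S \notin avoiding Sp.
Proof.
by move=> SSp; rewrite inE negb_forall_in; apply/exists_inP; exists S; rewrite ?subxx.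
Qed.

Definition minimal_nonmembers D :=
  [set Y : {set T} | minset [pred Z | Z \notin D] Y].

Lemma avoiding_minimal_nonmembers D :
  down_closed D -> avoiding (minimal_nonmembers D) = D.
Proof.
move=> downD; apply/setP => Z; rewrite inE; apply/forall_inP/idP => [avZ | ZD Y].
  apply/negPn/negP => /(minset_exists (P := [pred Z | Z \notin D])) [Y minY sYZ].
  by have := avZ Y; rewrite inE minY sYZ => /(_ isT).
rewrite inE => /minsetp /=; apply: contra => sYZ; exact: downD sYZ ZD.
Qed.

Lemma down_closed_setU1_avoiding Sp S0 :
  (forall S, S \in Sp -> S \subset S0 -> S = S0) ->
  down_closed (S0 |: avoiding Sp).
Proof.
move=> minS0 Z Z' sZ'Z; rewrite !in_setU1 => /orP[/eqP ZS0 | avZ].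
  subst Z.
  have [_|] := boolP (Z' \in avoiding Sp); first by rewrite orbT.
  rewrite inE negb_forall_in => /exists_inP[S SSp /negPn sSZ'].
  by rewrite eqEsubset sZ'Z -(minS0 S SSp (subset_trans sSZ' sZ'Z)) sSZ'.
by rewrite (avoiding_down_closed sZ'Z avZ) orbT.
Qed.

End DownSets.

Lemma minimal_nonmembers_sperner n (D : {set {set 'I_n}}) :
  sperner (minimal_nonmembers D).
Proof.
move=> S T; rewrite !inE => minS minT; exact: minsetinf minT (minsetp minS).
Qed.

Lemma mem_Q n (S H X : {set 'I_n}) :
  H \subset S -> (X \in Q S H) = (X :&: S == H).
Proof.
move=> /subsetP sHS; apply/imsetP/eqP => [[B] | <-].
  rewrite inE => /subsetP sBS' ->; apply/setP => i; rewrite !inE.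
  case iS: (i \in S); last first.
    by rewrite andbF; apply/esym/negbTE; apply: contraFN iS; apply: sHS.
  case iB: (i \in B); last by rewrite orbF andbT.
  by have := sBS' i iB; rewrite inE iS.
by exists (X :\: S); rewrite ?setID // inE subsetDr.
Qed.

Section Agreement.
Variables (n : nat) (A : {set 'I_n}).
Implicit Types (Sp : {set {set 'I_n}}) (S T X : {set 'I_n}).

Definition agree X := [set i | (i \in X) == (i \in A)].

Lemma agreeK : involutive agree.
Proof.
by move=> X; apply/setP => i; rewrite !inE; case: (i \in X); case: (i \in A).
Qed.

Lemma agree_inj : injective agree.
Proof. exact: inv_inj agreeK. Qed.

Lemma setI_eq_hA X S : (X :&: S == hA A S) = (S \subset agree X).
Proof.
apply/eqP/subsetP => [XS i iS | sSX].
  by move/setP: XS => /(_ i); rewrite !inE iS andbT => ->; rewrite eqxx.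
apply/setP => i; rewrite !inE; case iS: (i \in S); rewrite ?andbF ?andbT //.
by apply/eqP; have := sSX i iS; rewrite inE.
Qed.

Lemma mem_Fam_hA Sp X : (X \in Fam Sp (hA A)) = (agree X \in avoiding Sp).
Proof.
rewrite in_setC inE; apply/negP/forall_inP => [notQ S SSp | avX /bigcupP[S SSp]].
  apply: contra_notN notQ => sSX; apply/bigcupP; exists S => //.
  by rewrite mem_Q ?subsetIl // setI_eq_hA.
by rewrite mem_Q ?subsetIl // setI_eq_hA; apply/negP; apply: avX.
Qed.

Lemma Fam_hAE Sp : Fam Sp (hA A) = agree @: avoiding Sp.
Proof.
by apply/setP => X; rewrite -{2}[X]agreeK (mem_imset _ _ agree_inj) mem_Fam_hA.
Qed.

Lemma Sh_Fam_hA Sp : Sh (Fam Sp (hA A)) = avoiding Sp.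
Proof.
apply/setP => S; rewrite inE /shatters; apply/eqP/idP => [shS | avS].
  have : hA A S \in powerset S by rewrite inE subsetIl.
  rewrite -shS => /imsetP[X]; rewrite mem_Fam_hA => avX /eqP.
  by rewrite eq_sym setI_eq_hA => /avoiding_down_closed; apply.
apply/eqP; rewrite eqEsubset; apply/andP; split.
  by apply/subsetP => _ /imsetP[X _ ->]; rewrite inE subsetIr.
apply/subsetP => T; rewrite inE => sTS.
(* Outside S, X disagrees with A, so agree X stays inside S. *)
pose X := T :|: (~: S :\: A).
have outT i : i \notin S -> (i \in T) = false.
  by move=> iS; apply/negbTE; apply: contra iS; apply: (subsetP sTS).
have XS : X :&: S = T.
  apply/setP => i; rewrite !inE; have [iS | iS] := boolP (i \in S).
    by rewrite andbT andbF orbF.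
  by rewrite andbF outT.
have sXS : agree X \subset S.
  apply/subsetP => i; rewrite !inE; have [// | iS] := boolP (i \in S).
  by rewrite outT //; case: (i \in A).
apply/imsetP; exists X => //.
by rewrite mem_Fam_hA (avoiding_down_closed sXS avS).
Qed.

Lemma Fam_hA_s_extremal Sp : s_extremal (Fam Sp (hA A)).
Proof. by rewrite /s_extremal Sh_Fam_hA Fam_hAE card_imset //; apply: agree_inj. Qed.

Lemma setU1_Fam_hA Sp S0 : sperner Sp -> S0 \in Sp ->
  agree S0 |: Fam Sp (hA A) = Fam (minimal_nonmembers (S0 |: avoiding Sp)) (hA A).
Proof.
move=> spSp S0Sp.
have downD := down_closed_setU1_avoiding (fun S SSp => spSp S S0 SSp S0Sp).
apply/setP => X; rewrite in_setU1 !mem_Fam_hA avoiding_minimal_nonmembers //.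
by rewrite in_setU1 -(inj_eq agree_inj) agreeK.
Qed.

End Agreement.

Theorem theorem9 (n : nat) (Sp : {set {set 'I_n}}) (A : {set 'I_n}) :
  sperner Sp ->
  s_extremal (Fam Sp (hA A)) /\
  (Fam Sp (hA A) != [set: {set 'I_n}] ->
   exists F : {set 'I_n},
     F \notin Fam Sp (hA A) /\
     s_extremal (F |: Fam Sp (hA A)) /\
     exists Sp' : {set {set 'I_n}},
       sperner Sp' /\ F |: Fam Sp (hA A) = Fam Sp' (hA A)).
Proof.
move=> spSp; split=> [|FnT]; first exact: Fam_hA_s_extremal.
have [Sp0 | [S0 S0Sp]] := set_0Vmem Sp.
  by move: FnT; rewrite /Fam Sp0 big_set0 setC0 eqxx.
exists (agree A S0); split.
  by rewrite mem_Fam_hA agreeK notin_avoiding.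
rewrite setU1_Fam_hA //; split; first exact: Fam_hA_s_extremal.
exists (minimal_nonmembers (S0 |: avoiding Sp)); split=> //.
exact: minimal_nonmembers_sperner.
Qed.
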